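(* Let $N$ be an even integer. Then: (1) if $N \geq 6$, $f(N,\frac{N}{2}) = \frac{N^2}{4}+3$; (2) if $N \geq 10$, $f(N,\frac{N}{2}+1) > f(N,\frac{N}{2})$.
   Context: All graphs are finite and simple; $L(G)$ is the line graph of $G$; $e(\cdot)$, $\Delta(\cdot)$, $\delta(\cdot)$ denote number of edges, maximum degree and minimum degree. For integers $N \ge \Delta \ge 1$, $f(N,\Delta) = \max\{ e(L(G)) : e(G)=N, \Delta(G)=\Delta, \delta(G)\geq 1\}$, the maximum over all simple graphs $G$. *)

From mathcomp Require Import all_boot.
Set Implicit Arguments. Unset Strict Implicit. Unset Printing Implicit Defensive.

Definition simple_graph (T : finType) (e : rel T) : Prop :=
  symmetric e /\ irreflexive e.

Definition edges (T : finType) (e : rel T) : {set {set T}} :=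
  [set A : {set T} | [exists u, exists v, e u v && (A == [set u; v])]].

Definition num_edges (T : finType) (e : rel T) : nat := #|edges e|.

Definition deg (T : finType) (e : rel T) (v : T) : nat := #|[set u | e v u]|.

Definition max_deg (T : finType) (e : rel T) : nat := \max_(v : T) deg e v.

Definition min_deg_ge1 (T : finType) (e : rel T) : Prop := forall v : T, 0 < deg e v.

(* e(L(G)): the number of edges of the line graph, i.e. of unordered pairs
   of distinct edges of G sharing a common endpoint. *)
Definition line_graph_edges (T : finType) (e : rel T) : nat :=
  #|[set P : {set {set T}} | [&& P \subset edges e, #|P| == 2 &
        [exists v, [forall A in P, v \in A]]]]|.

Definition admissible (N D : nat) (T : finType) (e : rel T) : Prop :=
  [/\ simple_graph e, num_edges e = N, max_deg e = D & min_deg_ge1 e].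

(* m = f(N, D): m is the maximum of e(L(G)) over all admissible G
   (attained, and an upper bound). *)
Definition is_f (N D m : nat) : Prop :=
  (exists (T : finType) (e : rel T), admissible N D e /\ line_graph_edges e = m) /\
  (forall (T : finType) (e : rel T), admissible N D e -> line_graph_edges e <= m).

From mathcomp Require Import all_boot zify.
From Stdlib Require Import Classical.
Set Implicit Arguments. Unset Strict Implicit. Unset Printing Implicit Defensive.

(* Write N = 2k and use e(L(G)) = sum_v C(d(v), 2). Let a be a vertex of degree k,
   H = G - a (which has k edges) and b a vertex of maximum degree h in H; then
   e(L(G)) = C(k, 2) + e(L(H)) + sum_{v ~ a} d_H(v), and the last sum is at most 2k,
   or at most 2k - h when b is not a neighbour of a.  If h <= 2 then e(L(H)) <= k;
   otherwise deleting b from H gives e(L(H)) <= C(h, 2) + C(k - h, 2) + 2(k - h).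
   In every case the total is at most k^2 + 3, with equality for the book with k - 1
   pages plus an edge between two pages.  For k >= 5 the book with k pages minus one
   page edge has maximum degree k + 1 and k^2 + k - 1 > k^2 + 3 line-graph edges. *)

Lemma double_count (I J : finType) (r : I -> J -> bool) :
  \sum_i #|[set j | r i j]| = \sum_j #|[set i | r i j]|.
Proof.
rewrite (eq_bigr (fun i => \sum_j r i j)); last first.
  by move=> i _; rewrite -sum1dep_card big_mkcond; apply: eq_bigr => j _; case: (r i j).
rewrite exchange_big; apply: eq_bigr => j _.
by rewrite -sum1dep_card [RHS]big_mkcond; apply: eq_bigr => i _; case: (r i j).
Qed.

Lemma set2_of_card2 (T : finType) (A : {set T}) v w :
  #|A| = 2 -> v \in A -> w \in A -> v != w -> A = [set v; w].
Proof.
move=> hA hv hw hvw; apply/eqP; rewrite eq_sym eqEcard cards2 hvw hA andbT.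
by apply/subsetP => x; rewrite !inE => /orP [/eqP ->|/eqP ->].
Qed.

Lemma bin2_sqr n : 'C(n, 2) * 2 + n = n ^ 2.
Proof. by elim: n => // n IH; rewrite binS bin1; lia. Qed.

Lemma bin2D m n : 'C(m + n, 2) = 'C(m, 2) + 'C(n, 2) + m * n.
Proof. have := bin2_sqr (m + n); have := bin2_sqr m; have := bin2_sqr n; lia. Qed.

Lemma in_edges (T : finType) {e : rel T} A :
  reflect (exists u v, e u v /\ A = [set u; v]) (A \in edges e).
Proof.
rewrite inE; apply: (iffP existsP).
  by case=> u /existsP [v /andP [h /eqP ->]]; exists u, v.
by case=> u [v [h ->]]; exists u; apply/existsP; exists v; rewrite h eqxx.
Qed.

Section SimpleGraph.
Variables (T : finType) (e : rel T).
Hypothesis ge : simple_graph e.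

Lemma card_edge A : A \in edges e -> #|A| = 2.
Proof.
case: ge => _ hi /in_edges [u [v [huv ->]]]; rewrite cards2.
by case: eqP huv => // ->; rewrite hi.
Qed.

Definition edges_at v := [set A in edges e | v \in A].

Lemma in_edges_at v A : (A \in edges_at v) = (A \in edges e) && (v \in A).
Proof. by rewrite inE. Qed.

Lemma card_edges_at v : #|edges_at v| = deg e v.
Proof.
case: ge => hs hi.
have -> : edges_at v = (fun u => [set v; u]) @: [set u | e v u].
  apply/setP => A; apply/idP/idP.
    rewrite inE => /andP [/in_edges [x [y [hxy ->]]]].
    rewrite !inE => /orP [/eqP ->|/eqP ->].
      by apply/imsetP; exists y; rewrite ?inE.
    by apply/imsetP; exists x; rewrite ?inE 1?hs // setUC.
  case/imsetP => u; rewrite inE => huv ->; rewrite inE set21 andbT.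
  by apply/in_edges; exists v, u.
rewrite card_in_imset // => u1 u2; rewrite !inE => h1 h2 heq.
have : u1 \in [set v; u2] by rewrite -heq set22.
rewrite !inE => /orP [/eqP h|/eqP //].
by move: h1; rewrite -h hi.
Qed.

Lemma handshake : \sum_v deg e v = 2 * num_edges e.
Proof.
under eq_bigr do rewrite -card_edges_at.
rewrite /edges_at (double_count (fun v A => (A \in edges e) && (v \in A))).
rewrite /num_edges mulnC -sum_nat_const [RHS]big_mkcond /=; apply: eq_bigr => A _.
case hA: (A \in edges e); last by apply: eq_card0 => v; rewrite !inE.
by rewrite -(card_edge hA); apply: eq_card => v; rewrite !inE.
Qed.

Lemma card_common_endpoints_le1 (P : {set {set T}}) :
  #|P| = 2 -> #|[set v | P \subset edges_at v]| <= 1.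
Proof.
move/eqP/cards2P => [A [B [hAB ->]]].
apply/card_le1_eqP => v w; rewrite !inE !subUset !sub1set !in_edges_at.
case/andP=> [/andP [hA hvA] /andP [hB hvB]] /andP [/andP [_ hwA] /andP [_ hwB]].
have [//|hvw] := eqVneq v w; move: hAB.
rewrite (set2_of_card2 (card_edge hA) hvA hwA hvw).
by rewrite (set2_of_card2 (card_edge hB) hvB hwB hvw) eqxx.
Qed.

Lemma subset_edges_at v (P : {set {set T}}) :
  (P \subset edges_at v) = (P \subset edges e) && [forall A in P, v \in A].
Proof.
apply/subsetP/andP => [hP|[/subsetP hP /forall_inP hv] A hA].
  split; first by apply/subsetP => A /hP; rewrite in_edges_at => /andP [].
  by apply/forall_inP => A /hP; rewrite in_edges_at => /andP [].
by rewrite in_edges_at hP ?hv.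
Qed.

Lemma line_graph_edgesE : line_graph_edges e = \sum_v 'C(deg e v, 2).
Proof.
under [RHS]eq_bigr do rewrite -card_edges_at -cards_draws.
rewrite (double_count (fun (v : T) (P : {set {set T}}) =>
  (P \subset edges_at v) && (#|P| == 2))).
rewrite /line_graph_edges -sum1_card [LHS]big_mkcond /=; apply: eq_bigr => P _.
rewrite inE; have [h2|h2] := eqVneq #|P| 2; last first.
  by rewrite andbF; apply/esym/eq_card0 => v; rewrite !inE andbF.
have -> : [set v | P \subset edges_at v & true] = [set v | P \subset edges_at v].
  by apply/setP => v; rewrite !inE andbT.
have := card_common_endpoints_le1 h2; rewrite /=.
case: (boolP (_ && _)) => [/andP [hsub /existsP [v hv]]|hno] le1.
  apply/esym/eqP; rewrite eqn_leq le1 card_gt0; apply/set0Pn; exists v.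
  by rewrite inE subset_edges_at hsub.
apply/esym/eq_card0 => v; rewrite inE subset_edges_at; apply: contraNF hno => /andP [-> hv].
by apply/existsP; exists v.
Qed.

Lemma sum_deg_le (P : pred T) : \sum_(v | P v) deg e v <= 2 * num_edges e.
Proof. by rewrite -handshake [leqRHS](bigID P) /= leq_addr. Qed.

Lemma sum_deg_add_le (P : pred T) b :
  ~~ P b -> \sum_(v | P v) deg e v + deg e b <= 2 * num_edges e.
Proof.
move=> Pb; rewrite -handshake [leqRHS](bigID P) /= leq_add2l.
by rewrite [leqRHS](bigD1 b) //= leq_addr.
Qed.

Lemma line_graph_edges_le_maxdeg D :
  (forall v, deg e v <= D) -> line_graph_edges e <= D.-1 * num_edges e.
Proof.
move=> degD; rewrite line_graph_edgesE -(leq_pmul2r (_ : 0 < 2)) // big_distrl /=.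
rewrite -mulnA [num_edges e * 2]mulnC -handshake big_distrr /=.
by apply: leq_sum => v _; have := bin2_sqr (deg e v); have := degD v; nia.
Qed.

End SimpleGraph.

Lemma line_graph_edges_le_bin (T : finType) (e : rel T) :
  line_graph_edges e <= 'C(num_edges e, 2).
Proof.
rewrite /line_graph_edges /num_edges -cards_draws; apply: subset_leq_card.
by apply/subsetP => P; rewrite !inE => /and3P [-> -> _].
Qed.

Definition remove_vertex (T : finType) (e : rel T) (a : T) : rel T :=
  fun u v => [&& e u v, u != a & v != a].

Section RemoveVertex.
Variables (T : finType) (e : rel T) (a : T).
Hypothesis ge : simple_graph e.
Local Notation H := (remove_vertex e a).

Lemma remove_vertex_simple : simple_graph H.
Proof.
case: ge => hs hi; split => [u v|u]; last by rewrite /remove_vertex hi.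
by rewrite /remove_vertex hs [(u != a) && _]andbC.
Qed.

Lemma adj_le_deg v : e v a <= deg e v.
Proof. by rewrite /deg (cardsD1 a) inE; case: (e v a). Qed.

Lemma deg_remove_vertex v : deg H v = if v == a then 0 else deg e v - e v a.
Proof.
rewrite /deg; case: eqP => [->|/eqP hva].
  by apply: eq_card0 => u; rewrite !inE /remove_vertex eqxx andbF.
have -> : [set u | H v u] = [set u | e v u] :\ a.
  by apply/setP => u; rewrite !inE /remove_vertex hva andbC.
by rewrite [#|[set u | e v u]|](cardsD1 a) inE addKn.
Qed.

Lemma deg_remove_vertex_le v : deg H v <= deg e v.
Proof. by rewrite deg_remove_vertex; case: ifP => _; rewrite ?leq_subr. Qed.

Lemma edges_remove_vertex : edges H = edges e :\: edges_at e a.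
Proof.
apply/eqP; rewrite eqEsubset; apply/andP; split; apply/subsetP => A;
  rewrite in_setD in_edges_at negb_and.
  case/in_edges => u [v [/and3P [huv hua hva] ->]].
  rewrite in_set2 negb_or eq_sym hua eq_sym hva orbT /=.
  by apply/in_edges; exists u, v.
case/andP => hnot /[dup] hAe /in_edges [u [v [huv hA]]].
have haA : a \notin A by move: hnot; rewrite hAe.
apply/in_edges; exists u, v; split => //; rewrite /remove_vertex huv.
by move: haA; rewrite hA in_set2 negb_or !(eq_sym a).
Qed.

Lemma num_edges_remove_vertex : num_edges H = num_edges e - deg e a.
Proof.
rewrite /num_edges edges_remove_vertex cardsDS ?card_edges_at //.
by apply/subsetP => A; rewrite in_edges_at => /andP [].
Qed.

Lemma line_graph_edges_remove_vertex :
  line_graph_edges e =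
  'C(deg e a, 2) + line_graph_edges H + \sum_(v | e a v) deg H v.
Proof.
case: (ge) => hs hi.
have split_bin v : 'C(deg e v, 2) = (if v == a then 'C(deg e a, 2) else 0)
    + 'C(deg H v, 2) + (if e a v then deg H v else 0).
  rewrite deg_remove_vertex; case: eqP => [->|/eqP hva]; first by rewrite hi /= !addn0.
  have := adj_le_deg v; rewrite hs; case: (e a v) => /= [|_]; last by rewrite subn0 addn0.
  by case: (deg e v) => // d _; rewrite binS bin1 subn1 addnC.
rewrite line_graph_edgesE // (eq_bigr _ (fun v _ => split_bin v)) !big_split /=.
rewrite (line_graph_edgesE remove_vertex_simple) [\sum_(v | e a v) _]big_mkcond.
by rewrite (bigD1 a) //= eqxx big1 ?addn0 // => v /negbTE ->.
Qed.

End RemoveVertex.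

Lemma line_graph_edges_le_vertex (T : finType) (e : rel T) b : simple_graph e ->
  line_graph_edges e <=
  'C(deg e b, 2) + 'C(num_edges e - deg e b, 2) + 2 * (num_edges e - deg e b).
Proof.
move=> ge; rewrite (line_graph_edges_remove_vertex b ge) -!addnA leq_add2l.
rewrite -num_edges_remove_vertex //; apply: leq_add; first exact: line_graph_edges_le_bin.
exact/sum_deg_le/remove_vertex_simple.
Qed.

Lemma two_hubs_arith h x L S :
  3 <= h -> L <= 'C(h, 2) + 'C(x, 2) + 2 * x ->
  (0 < x /\ S <= 2 * (h + x)) \/ S + h <= 2 * (h + x) ->
  'C(h + x, 2) + L + S <= (h + x) ^ 2 + 3.
Proof.
move=> h3 hL hS.
have reduced : x + S <= h * x + h + 3 by case: hS => [[x_pos hS]|hS]; nia.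
by rewrite bin2D; have := bin2_sqr h; have := bin2_sqr x; lia.
Qed.

Lemma line_graph_edges_le_hub (T : finType) (e : rel T) k a :
  simple_graph e -> 3 <= k -> num_edges e = 2 * k ->
  (forall v, deg e v <= k) -> deg e a = k -> line_graph_edges e <= k ^ 2 + 3.
Proof.
move=> ge k_ge3 e_2k deg_le_k deg_a.
set H := remove_vertex e a; have gH : simple_graph H := remove_vertex_simple a ge.
have H_k : num_edges H = k by rewrite num_edges_remove_vertex // e_2k deg_a; lia.
have S_le : \sum_(v | e a v) deg H v <= 2 * k by rewrite -H_k sum_deg_le.
rewrite (line_graph_edges_remove_vertex a ge) -/H deg_a.
have [b _ max_b] := @arg_maxnP _ a xpredT (deg H) isT.
set h := deg H b in max_b *.
have [h_le2|h_ge3] := leqP h 2.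
  have := line_graph_edges_le_maxdeg gH (fun v => max_b v isT); rewrite H_k => LH.
  have := bin2_sqr k; nia.
have [x k_eq] : exists x, k = h + x.
  by exists (k - h); rewrite subnKC // (leq_trans (deg_remove_vertex_le _ _ _)).
have := line_graph_edges_le_vertex b gH; rewrite -/h H_k k_eq addKn => LH.
apply: two_hubs_arith LH _ => //; rewrite -k_eq.
(* Either b is a neighbour of a, so that h < k, or the sum misses the h edges at b. *)
case ab: (e a b); [left|right].
  have h_lt_k : h < k.
    have [hs hi] := ge; have b_ne_a : b != a by apply: contraTneq ab => ->; rewrite hi.
    by have := deg_le_k b; rewrite /h deg_remove_vertex (negbTE b_ne_a) hs ab; lia.
  by split => //; lia.
by rewrite -H_k sum_deg_add_le // ab.
Qed.

Lemma max_deg_attained (T : finType) (e : rel T) :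
  0 < max_deg e -> exists a, deg e a = max_deg e.
Proof.
case: (pickP (fun _ : T => true)) => [a0 _|T0]; last by rewrite /max_deg big_pred0.
by exists [arg max_(i > a0) deg e i]; rewrite /max_deg (bigmax_eq_arg a0).
Qed.

Lemma line_graph_edges_le_admissible (T : finType) (e : rel T) k :
  3 <= k -> admissible (2 * k) k e -> line_graph_edges e <= k ^ 2 + 3.
Proof.
move=> k_ge3 [ge e_2k max_k _].
have [a deg_a] : exists a, deg e a = k by rewrite -max_k; apply: max_deg_attained; lia.
by apply: (line_graph_edges_le_hub ge k_ge3 e_2k _ deg_a) => v; rewrite -max_k leq_bigmax.
Qed.

Definition nat_graph (n : nat) (r : rel nat) : rel 'I_n := fun u v => r u v.
Arguments nat_graph : clear implicits.

Lemma sum_nat_const_tail (F : nat -> nat) m n c :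
  m <= n -> (forall i, m <= i < n -> F i = c) ->
  \sum_(0 <= i < n) F i = \sum_(0 <= i < m) F i + (n - m) * c.
Proof.
by move=> mn Fc; rewrite (big_cat_nat (leq0n m) mn) /= (eq_big_nat _ _ Fc) sum_nat_const_nat.
Qed.

Section NatGraph.
Variables (n : nat) (r : rel nat) (d : nat -> nat) (N D : nat).
Hypotheses (r_sym : symmetric r) (r_irr : irreflexive r).
Hypothesis deg_r : forall i, i < n -> \sum_(0 <= u < n) r i u = d i.

Lemma nat_graph_simple : simple_graph (nat_graph n r).
Proof. by split => [u v|u]; rewrite /nat_graph ?r_irr // r_sym. Qed.

Lemma deg_nat_graph (v : 'I_n) : deg (nat_graph n r) v = d v.
Proof.
rewrite -deg_r // /deg -sum1dep_card big_mkord big_mkcond /=.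
by apply: eq_bigr => u _; rewrite /nat_graph; case: (r v u).
Qed.

Lemma nat_graph_admissible :
  \sum_(0 <= i < n) d i = 2 * N -> (forall i, i < n -> 0 < d i <= D) ->
  (exists2 i, i < n & d i = D) ->
  admissible N D (nat_graph n r) /\
  line_graph_edges (nat_graph n r) = \sum_(0 <= i < n) 'C(d i, 2).
Proof.
move=> sum_d d_pos [i0 i0n d_i0]; have ge := nat_graph_simple.
have degE (F : nat -> nat) : \sum_v F (deg (nat_graph n r) v) = \sum_(0 <= i < n) F (d i).
  by rewrite big_mkord; apply: eq_bigr => v _; rewrite deg_nat_graph.
split; last by rewrite line_graph_edgesE // (degE (fun x => 'C(x, 2))).
split => //.
- by apply/eqP; rewrite -(eqn_pmul2l (_ : 0 < 2)) // -handshake // (degE id) sum_d.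
- apply/eqP; rewrite eqn_leq; apply/andP; split.
    by apply/bigmax_leqP => v _; rewrite deg_nat_graph; case/andP: (d_pos v (ltn_ord v)).
  by rewrite -d_i0 -(deg_nat_graph (Ordinal i0n)) leq_bigmax.
- by move=> v; rewrite deg_nat_graph; case/andP: (d_pos v (ltn_ord v)).
Qed.

End NatGraph.

(* Vertices 0 and 1 are adjacent to each other and to every other vertex (a book
   with spine {0, 1}); the extra edge is {2, 3}. *)
Definition book_plus_edge (u v : nat) : bool :=
  (u != v) && ((minn u v <= 1) || (minn u v == 2) && (maxn u v == 3)).

(* The book with spine {0, 1}, without the edge {1, 2}. *)
Definition book_minus_edge (u v : nat) : bool :=
  (u != v) && ((minn u v == 0) || (minn u v == 1) && (maxn u v != 2)).

Lemma book_plus_edge_sym : symmetric book_plus_edge.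
Proof. by move=> u v; rewrite /book_plus_edge eq_sym minnC maxnC. Qed.

Lemma book_minus_edge_sym : symmetric book_minus_edge.
Proof. by move=> u v; rewrite /book_minus_edge eq_sym minnC maxnC. Qed.

Lemma book_plus_edge_irr : irreflexive book_plus_edge.
Proof. by move=> u; rewrite /book_plus_edge eqxx. Qed.

Lemma book_minus_edge_irr : irreflexive book_minus_edge.
Proof. by move=> u; rewrite /book_minus_edge eqxx. Qed.

Section Books.
Variable k : nat.

Definition book_plus_edge_deg i :=
  match i with 0 | 1 => k | 2 | 3 => 3 | _ => 2 end.

Definition book_minus_edge_deg i :=
  match i with 0 => k.+1 | 1 => k | 2 => 1 | _ => 2 end.

Lemma sum_book_plus_edge i : 3 <= k ->
  \sum_(0 <= u < k.+1) book_plus_edge i u = book_plus_edge_deg i.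
Proof.
move=> k_ge3; rewrite (sum_nat_const_tail (m := 4) (c := i <= 1)) //; last first.
  by move=> u /andP [u_ge4 _]; rewrite /book_plus_edge; lia.
by case: i => [|[|[|[|i]]]]; rewrite /book_plus_edge_deg !big_nat_recl //= big_geq //=; lia.
Qed.

Lemma sum_book_minus_edge i : 0 < k ->
  \sum_(0 <= u < k.+2) book_minus_edge i u = book_minus_edge_deg i.
Proof.
move=> k_pos; rewrite (sum_nat_const_tail (m := 3) (c := i <= 1)).
- by case: i => [|[|[|i]]]; rewrite /book_minus_edge_deg !big_nat_recl //= big_geq //=; lia.
- lia.
- by move=> u /andP [u_ge3 _]; rewrite /book_minus_edge; lia.
Qed.

Lemma book_plus_edge_extremal : 3 <= k ->
  admissible (2 * k) k (nat_graph k.+1 book_plus_edge) /\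
  line_graph_edges (nat_graph k.+1 book_plus_edge) = k ^ 2 + 3.
Proof.
move=> k_ge3; have sum_d : \sum_(0 <= i < k.+1) book_plus_edge_deg i = 2 * (2 * k).
  rewrite (sum_nat_const_tail (m := 4) (c := 2)) //; last first.
    by case=> [|[|[|[|i]]]].
  by rewrite /book_plus_edge_deg !big_nat_recl //= big_geq //=; lia.
have d_pos i : i < k.+1 -> 0 < book_plus_edge_deg i <= k.
  by case: i => [|[|[|[|i]]]] /=; lia.
have [adm ->] := nat_graph_admissible book_plus_edge_sym book_plus_edge_irr
  (fun i _ => sum_book_plus_edge i k_ge3) sum_d d_pos (ex_intro2 _ _ 0 isT erefl).
split => //; rewrite (sum_nat_const_tail (m := 4) (c := 1)) //; last first.
  by case=> [|[|[|[|i]]]].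
rewrite /book_plus_edge_deg !big_nat_recl //= big_geq //=.
by have := bin2_sqr 3; have := bin2_sqr k; lia.
Qed.

Lemma book_minus_edge_beats : 0 < k ->
  admissible (2 * k) k.+1 (nat_graph k.+2 book_minus_edge) /\
  line_graph_edges (nat_graph k.+2 book_minus_edge) = k ^ 2 + k - 1.
Proof.
move=> k_pos; have sum_d : \sum_(0 <= i < k.+2) book_minus_edge_deg i = 2 * (2 * k).
  rewrite (sum_nat_const_tail (m := 3) (c := 2)); last 2 first.
  - lia.
  - by case=> [|[|[|i]]].
  by rewrite /book_minus_edge_deg !big_nat_recl //= big_geq //=; lia.
have d_pos i : i < k.+2 -> 0 < book_minus_edge_deg i <= k.+1.
  by case: i => [|[|[|i]]] /=; lia.
have [adm ->] := nat_graph_admissible book_minus_edge_sym book_minus_edge_irr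
  (fun i _ => sum_book_minus_edge i k_pos) sum_d d_pos (ex_intro2 _ _ 0 isT erefl).
split => //; rewrite (sum_nat_const_tail (m := 3) (c := 1)); last 2 first.
- lia.
- by case=> [|[|[|i]]].
rewrite /book_minus_edge_deg !big_nat_recl //= big_geq //=.
by have := bin2_sqr 1; have := bin2_sqr k; have := bin2_sqr k.+1; lia.
Qed.

End Books.

Lemma bounded_exists_max (P : nat -> Prop) B :
  (forall m, P m -> m <= B) -> (exists m, P m) ->
  exists m, P m /\ forall m', P m' -> m' <= m.
Proof.
elim: B => [|B IH] le_B [m Pm].
  by exists m; split => // m' /le_B; have := le_B m Pm; lia.
have [PB|nPB] := classic (P B.+1); first by exists B.+1; split => // m' /le_B.
apply: IH; last by exists m.
move=> m' Pm'; have := le_B m' Pm'; rewrite leq_eqVlt => /predU1P [eq_m'|] //.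
by rewrite -eq_m' in nPB.
Qed.

Lemma exists_is_f N D :
  (exists (T : finType) (e : rel T), admissible N D e) -> exists m, is_f N D m.
Proof.
move=> [T [e adm]].
set attained := fun m => exists (T : finType) (e : rel T),
  admissible N D e /\ line_graph_edges e = m.
have bounded m : attained m -> m <= 'C(N, 2).
  by move=> [T' [e' [[_ <- _ _] <-]]]; apply: line_graph_edges_le_bin.
have [|m [att_m max_m]] := bounded_exists_max bounded.
  by exists (line_graph_edges e), T, e.
by exists m; split => // T' e' adm'; apply: max_m; exists T', e'.
Qed.

Theorem mainTheorem14 (N : nat) (hN : ~~ odd N) :
  (6 <= N -> is_f N N./2 (N ^ 2 %/ 4 + 3)) /\
  (10 <= N -> exists m1 m2 : nat,
      [/\ is_f N N./2.+1 m1, is_f N N./2 m2 & m2 < m1]).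
Proof.
have N_eq : N = 2 * N./2 by rewrite -[LHS]odd_double_half (negbTE hN) mul2n.
move: N_eq hN; set k := N./2 => -> _.
rewrite expnMn mulKn //.
have extremal : 3 <= k -> is_f (2 * k) k (k ^ 2 + 3).
  move=> k_ge3; have [adm lge] := book_plus_edge_extremal k_ge3.
  split; first by exists _, (nat_graph k.+1 book_plus_edge).
  by move=> T e; apply: line_graph_edges_le_admissible.
split => [N_ge6|N_ge10]; first by apply: extremal; lia.
have [|adm lge] := @book_minus_edge_beats k; first by lia.
have [m1 f_m1] : exists m, is_f (2 * k) k.+1 m.
  by apply: exists_is_f; exists _, (nat_graph k.+2 book_minus_edge).
exists m1, (k ^ 2 + 3); split => //; first by apply: extremal; lia.
by apply: leq_trans (f_m1.2 _ _ adm); rewrite lge; lia.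
Qed.
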